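(* Let $S$ and $R$ be two nodes joined by $h$ parallel undirected unit-capacity edges, and let $0\le k\le h$. Against a $k$-edge passive adversary, every $N$-round protocol by which $S$ securely sends a message $\mathcal{W}$ to $R$ satisfies $H(\mathcal{W})\le N(h-k)$, i.e. the secrecy rate is at most $h-k$.
   Context: Each use of an edge carries one symbol of a finite field $\mathbb{F}$; entropies in units of $\log|\mathbb{F}|$. $S$ and $R$ each have private randomness ($\mathcal{K}_S$, $\mathcal{K}_R$), mutually independent and independent of $\mathcal{W}$; there is no shared randomness. In each round each undirected edge carries one symbol in one direction, and transmissions depend causally on the sender's message/randomness and previously received symbols. Decodability: $R$ recovers $\mathcal{W}$ with zero error. Secrecy: $H(\mathcal{W}\mid\mathcal{V}_{\mathcal{A}})=H(\mathcal{W})$, where a $k$-edge adversary chooses any $k$ of the edges and $\mathcal{V}_{\mathcal{A}}$ is all values sent on them during the protocol; this must hold for every choice. Secrecy rate is $H(\mathcal{W})/N$. *)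

From Stdlib Require Import Reals.
From mathcomp Require Import all_boot all_algebra.
Set Implicit Arguments. Unset Strict Implicit. Unset Printing Implicit Defensive.

Local Open Scope R_scope.

Definition prob (Om : finType) (p : Om -> R) (E : pred Om) : R :=
  \big[Rplus/R0]_(o | E o) p o.

Definition xlnx (x : R) : R := if Rlt_dec R0 x then x * ln x else R0.

Definition entropy (q : nat) (Om : finType) (p : Om -> R) (T : finType) (X : Om -> T) : R :=
  - (\big[Rplus/R0]_(x : T) xlnx (prob p (fun o => X o == x))) / ln (INR q).

Definition cond_entropy (q : nat) (Om : finType) (p : Om -> R) (T U : finType)
    (X : Om -> T) (Y : Om -> U) : R :=
  - (\big[Rplus/R0]_(x : T) \big[Rplus/R0]_(y : U)
        (let pxy := prob p (fun o => (X o == x) && (Y o == y)) in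
         let py  := prob p (fun o => Y o == y) in
         if Rlt_dec R0 pxy then pxy * ln (pxy / py) else R0)) / ln (INR q).

(* Transcript after the first n rounds: entry (t, e) is the symbol sent on edge e
   in round t (for t < n), and the default z otherwise.  The symbol of round t is
   computed by [step t e hist] from the transcript [hist] of rounds < t only,
   which enforces causality.  Since every edge joins S and R, both nodes observe
   the whole past transcript. *)
Fixpoint transcript (F : Type) (z : F) (N h : nat)
    (step : 'I_N -> 'I_h -> ('I_N -> 'I_h -> F) -> F) (n : nat) : 'I_N -> 'I_h -> F :=
  match n with
  | 0 => fun _ _ => z
  | n'.+1 =>
      let prev := transcript z step n' in
      fun t e => if nat_of_ord t == n' then step t e prev else prev t e
  end.

(* Full run of the protocol.  dir t e = true : edge e carries S -> R in round t
   (S's symbol depends on message w, S's randomness ks and past transcript);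
   dir t e = false : R -> S (depends on R's randomness kr and past transcript). *)
Definition run (F : finFieldType) (N h : nat) (Wt KSt KRt : Type)
    (dir : 'I_N -> 'I_h -> bool)
    (fS : 'I_N -> 'I_h -> Wt -> KSt -> ('I_N -> 'I_h -> F) -> F)
    (fR : 'I_N -> 'I_h -> KRt -> ('I_N -> 'I_h -> F) -> F)
    (w : Wt) (ks : KSt) (kr : KRt) : 'I_N -> 'I_h -> F :=
  transcript (@GRing.zero F)
    (fun t e hist => if dir t e then fS t e w ks hist else fR t e kr hist) N.

Definition view (F : finFieldType) (N h : nat) (A : {set 'I_h})
    (tr : 'I_N -> 'I_h -> F) : {ffun 'I_N * 'I_h -> F} :=
  [ffun te : 'I_N * 'I_h => if te.2 \in A then tr te.1 te.2 else @GRing.zero F].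

From Stdlib Require Import Reals Lra FunctionalExtensionality.
From HB Require Import structures.
From mathcomp Require Import all_boot all_algebra.
Set Implicit Arguments. Unset Strict Implicit. Unset Printing Implicit Defensive.
Local Open Scope R_scope.

(* Fix a wiretap set A of k edges.  By secrecy, H(W) = H(W | V_A), so it suffices
   to bound the conditional entropy.  For every value y of the adversary's view,
   the messages of positive joint probability with y are at most q^(N(h-k)) many
   (q = |F|): since every edge joins S and R, the whole transcript is public to
   both ends, and a transcript produced by (w1,s1,r1) and by (w2,s2,r2) is also
   produced by (w1,s1,r2) ("rectangle" property of protocols); hence zero-error
   decoding makes the transcript determine the message, and once y is fixed the
   transcript is determined by the N(h-k) symbols on the unobserved edges.
   A Gibbs-type inequality then gives H(W | V_A) <= log_q (max support size). *)

Lemma Rplus_left_id : left_id R0 Rplus. Proof. exact: Rplus_0_l. Qed.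
Lemma Rplus_associative : associative Rplus.
Proof. by move=> x y z; rewrite Rplus_assoc. Qed.
HB.instance Definition _ :=
  Monoid.isComLaw.Build R R0 Rplus Rplus_associative Rplus_comm Rplus_left_id.

Section RealSums.
Variables (I : finType) (P : pred I).

Lemma Rsum_le (f g : I -> R) :
  (forall i, P i -> f i <= g i) ->
  \big[Rplus/R0]_(i | P i) f i <= \big[Rplus/R0]_(i | P i) g i.
Proof.
move=> fg; apply: (big_ind2 (fun a b => a <= b)) => //; first exact: Rle_refl.
by move=> *; apply: Rplus_le_compat.
Qed.

Lemma Rsum_ge0 (f : I -> R) :
  (forall i, P i -> 0 <= f i) -> 0 <= \big[Rplus/R0]_(i | P i) f i.
Proof.
move=> f0; apply: (big_ind (fun a => 0 <= a)) => //; first exact: Rle_refl.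
by move=> *; lra.
Qed.

Lemma Rsum_mull (f : I -> R) c :
  c * \big[Rplus/R0]_(i | P i) f i = \big[Rplus/R0]_(i | P i) (c * f i).
Proof.
apply: (big_rec2 (fun a b => c * a = b)); first by rewrite Rmult_0_r.
by move=> i a b _ <-; rewrite Rmult_plus_distr_l.
Qed.

Lemma Rsum_mulr (f : I -> R) c :
  \big[Rplus/R0]_(i | P i) f i * c = \big[Rplus/R0]_(i | P i) (f i * c).
Proof.
rewrite Rmult_comm Rsum_mull; apply: eq_bigr => i _; exact: Rmult_comm.
Qed.

Lemma Rsum_const c : \big[Rplus/R0]_(i | P i) c = INR #|P| * c.
Proof.
rewrite big_const; elim: #|P| => [|n IH]; first by rewrite /= Rmult_0_l.
by rewrite iterS IH S_INR; ring.
Qed.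

End RealSums.

Lemma Rsum_pair (A B : finType) (f : A * B -> R) :
  \big[Rplus/R0]_(o : A * B) f o = \big[Rplus/R0]_a \big[Rplus/R0]_b f (a, b).
Proof. by rewrite [RHS]pair_big; apply: eq_big => // -[a b]. Qed.

Lemma product_mass_sum (A B C : finType) (pa : A -> R) (pb : B -> R) (pc : C -> R) :
  \big[Rplus/R0]_(o : A * B * C) (pa o.1.1 * pb o.1.2 * pc o.2) =
  \big[Rplus/R0]_a pa a * \big[Rplus/R0]_b pb b * \big[Rplus/R0]_c pc c.
Proof.
have pair_mass : \big[Rplus/R0]_a pa a * \big[Rplus/R0]_b pb b =
    \big[Rplus/R0]_(ab : A * B) (pa ab.1 * pb ab.2).
  by rewrite Rsum_pair Rsum_mulr; apply: eq_bigr => a _; rewrite Rsum_mull.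
by rewrite pair_mass [LHS]Rsum_pair Rsum_mulr; apply: eq_bigr => -[a b] _; rewrite Rsum_mull.
Qed.

Lemma ln_INR_expn_ratio q n : (1 < q)%N -> ln (INR (q ^ n)) / ln (INR q) = INR n.
Proof.
move=> q_gt1; have q1 : 1 < INR q by rewrite -INR_1; apply/lt_INR/ltP.
have lnq0 : 0 < ln (INR q) by rewrite -ln_1; apply: ln_increasing; lra.
have -> : INR (q ^ n) = INR q ^ n by elim: n => [|n IH] //; rewrite expnS mult_INR IH.
by rewrite ln_pow; [field; lra | lra].
Qed.

(* Boolean positivity test, used to count the support of a mass function
   (the same test as in the definition of cond_entropy). *)
Definition posb (x : R) : bool := if Rlt_dec 0 x then true else false.

Lemma posbP x : reflect (0 < x) (posb x).
Proof. by rewrite /posb; case: Rlt_dec => H; constructor. Qed.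

Lemma Rsum_pos (I : finType) (P : pred I) (f : I -> R) :
  (forall i, 0 <= f i) -> 0 < \big[Rplus/R0]_(i | P i) f i ->
  exists2 i, P i & 0 < f i.
Proof.
move=> f0 sum_pos; case: (pickP (fun i => P i && posb (f i))).
  by move=> i /andP[Pi /posbP]; exists i.
move=> none; have : \big[Rplus/R0]_(i | P i) f i <= \big[Rplus/R0]_(i | P i) 0.
  apply: Rsum_le => i Pi; have := none i; rewrite Pi /=.
  by case: posbP => // /Rnot_lt_le.
by rewrite [X in _ <= X]big1 //; lra.
Qed.

Lemma Rmult3_pos_inv a b c : 0 <= a -> 0 <= b -> 0 <= c -> 0 < a * b * c ->
  [/\ 0 < a, 0 < b & 0 < c].
Proof.
move=> a0 b0 c0 abc.
split; apply: Rnot_le_lt => le0.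
- have a_eq0 : a = 0 by lra.
  by move: abc; rewrite a_eq0 !Rmult_0_l; lra.
- have b_eq0 : b = 0 by lra.
  by move: abc; rewrite b_eq0 Rmult_0_r Rmult_0_l; lra.
- have c_eq0 : c = 0 by lra.
  by move: abc; rewrite c_eq0 Rmult_0_r; lra.
Qed.

(* A pointwise Gibbs inequality: for a, s, M > 0,
   a ln (a / s) >= - a ln M + a - s / M, from ln u <= u - 1 at u = s / (M a). *)
Lemma xlog_ratio_lower a s M : 0 < a -> 0 < s -> 0 < M ->
  - ln M * a + (a - s / M) <= a * ln (a / s).
Proof.
move=> a0 s0 M0.
have u0 : 0 < s / (M * a) by apply: Rdiv_lt_0_compat => //; nra.
have ln_le : ln (s / (M * a)) <= s / (M * a) - 1.
  by have := exp_ineq1_le (ln (s / (M * a))); rewrite exp_ln //; lra.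
have split_ln : ln (a / s) = - ln M - ln (s / (M * a)).
  rewrite -[a / s](_ : / M * / (s / (M * a)) = a / s); last by field; lra.
  by rewrite ln_mult ?ln_Rinv //; apply: Rinv_0_lt_compat.
have -> : s / M = a * (s / (M * a)) by field; lra.
by rewrite split_ln; nra.
Qed.

Lemma gibbs_support (I : finType) (a : I -> R) (M : R) :
  (forall i, 0 <= a i) -> 0 < M -> INR #|[pred i | posb (a i)]| <= M ->
  let s := \big[Rplus/R0]_i a i in
  - ln M * s <=
  \big[Rplus/R0]_i (if Rlt_dec R0 (a i) then a i * ln (a i / s) else R0).
Proof.
move=> a0 M0 supp_le s.
pose gap i := if posb (a i) then a i - s / M else R0.
have term_lower i :
    - ln M * a i + gap i <= if Rlt_dec R0 (a i) then a i * ln (a i / s) else R0.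
  rewrite /gap /posb; case: Rlt_dec => ai0 /=; last first.
    have ai_eq0 : a i = 0 by have := a0 i; lra.
    by rewrite ai_eq0; lra.
  have : a i <= s.
    rewrite /s (bigD1 i) //=.
    by have := @Rsum_ge0 _ (fun j => j != i) a (fun j _ => a0 j); lra.
  by move=> ais; apply: xlog_ratio_lower; lra.
have gap_ge0 : 0 <= \big[Rplus/R0]_i gap i.
  rewrite (_ : \big[Rplus/R0]_i gap i =
      \big[Rplus/R0]_(i | posb (a i)) (a i + - (s / M))); last first.
    by rewrite [RHS]big_mkcond; apply: eq_bigr.
  rewrite big_split /=.
  have -> : \big[Rplus/R0]_(i | posb (a i)) a i = s.
    rewrite /s [RHS](bigID (fun i => posb (a i))) /= [X in _ + X]big1 ?Rplus_0_r // => i.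
    by case: posbP => // ai _; have := a0 i; lra.
  rewrite Rsum_const.
  have s0 : 0 <= s by apply: Rsum_ge0.
  have : INR #|(fun i => posb (a i))| * (s / M) <= M * (s / M).
    apply: Rmult_le_compat_r; first by apply: Rmult_le_pos; [|apply/Rlt_le/Rinv_0_lt_compat].
    by rewrite (eq_card (B := [pred i | posb (a i)])).
  have -> : M * (s / M) = s by field; lra.
  rewrite -Ropp_mult_distr_r; set t := INR _ * (s / M); lra.
have := @Rsum_le I xpredT _ _ (fun i _ => term_lower i).
by rewrite big_split /= -Rsum_mull -/s; lra.
Qed.

Lemma prob_marg (Om T : finType) (p : Om -> R) (X : Om -> T) (E : pred Om) :
  \big[Rplus/R0]_(x : T) prob p (fun o => (X o == x) && E o) = prob p E.
Proof.
rewrite /prob; under eq_bigr do rewrite big_mkcond.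
rewrite exchange_big [RHS]big_mkcond; apply: eq_bigr => o _.
rewrite (bigD1 (X o)) //= eqxx /= big1 ?Rplus_0_r // => x Xo_neq.
by rewrite eq_sym (negbTE Xo_neq).
Qed.

(* Apply the Gibbs bound to each fibre Y = y and sum. *)
Lemma cond_entropy_le_log_support (q : nat) (Om T U : finType) (p : Om -> R)
    (X : Om -> T) (Y : Om -> U) (M : R) :
  (1 < q)%N -> (forall o, 0 <= p o) -> \big[Rplus/R0]_o p o = 1 -> 0 < M ->
  (forall y, INR #|[pred x | posb (prob p (fun o => (X o == x) && (Y o == y)))]| <= M) ->
  cond_entropy q p X Y <= ln M / ln (INR q).
Proof.
move=> q_gt1 p0 p1 M0 supp_le.
have lnq0 : 0 < ln (INR q).
  by rewrite -ln_1; apply: ln_increasing; [lra|rewrite -INR_1; apply/lt_INR/ltP].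
have total : \big[Rplus/R0]_y prob p (fun o => Y o == y) = 1.
  rewrite -p1 (_ : \big[Rplus/R0]_o p o = prob p xpredT) // -(prob_marg p Y xpredT).
  by apply: eq_bigr => y _; apply: eq_bigl => o; rewrite andbT.
have fibre_lower y : - ln M * prob p (fun o => Y o == y) <=
    \big[Rplus/R0]_x
      (let pxy := prob p (fun o => (X o == x) && (Y o == y)) in
       let py := prob p (fun o => Y o == y) in
       if Rlt_dec R0 pxy then pxy * ln (pxy / py) else R0).
  rewrite -(prob_marg p X (fun o => Y o == y)).
  by apply: gibbs_support => // x; apply: Rsum_ge0.
rewrite /cond_entropy exchange_big /=.
have := @Rsum_le U xpredT _ _ (fun y _ => fibre_lower y).
rewrite -Rsum_mull total Rmult_1_r => sum_lower.
by apply: Rmult_le_compat_r; [apply/Rlt_le/Rinv_0_lt_compat|lra].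
Qed.

Section Transcripts.
Variables (F : Type) (z : F) (N h : nat).
Variable step : 'I_N -> 'I_h -> ('I_N -> 'I_h -> F) -> F.

Definition prefix (T : 'I_N -> 'I_h -> F) (m : nat) : 'I_N -> 'I_h -> F :=
  fun t e => if (t < m)%N then T t e else z.

Definition consistent (T : 'I_N -> 'I_h -> F) : Prop :=
  forall t e, T t e = step t e (prefix T t).

Lemma transcriptE m t e :
  transcript z step m t e = if (t < m)%N then step t e (transcript z step t) else z.
Proof.
elim: m => [|m IH] //=; case: eqP => [-> | t_neq_m]; first by rewrite ltnSn.
have -> : (t < m.+1)%N = (t < m)%N by rewrite ltnS leq_eqVlt (introF eqP t_neq_m).
exact: IH.
Qed.

Lemma transcript_prefix m : transcript z step m = prefix (transcript z step N) m.
Proof.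
apply: functional_extensionality => t; apply: functional_extensionality => e.
by rewrite /prefix !transcriptE ltn_ord; case: ifP.
Qed.

Lemma transcript_consistent : consistent (transcript z step N).
Proof. by move=> t e; rewrite transcriptE ltn_ord transcript_prefix. Qed.

(* The full transcript is the only consistent one: rounds are determined
   one after the other. *)
Lemma consistent_unique T : consistent T -> T = transcript z step N.
Proof.
move=> T_cons.
have prefix_eq m : prefix T m = transcript z step m.
  elim: m => [|m IH]; apply: functional_extensionality => t;
    apply: functional_extensionality => e //=.
  rewrite /prefix ltnS leq_eqVlt; case: eqP => [t_eq_m | _] /=; last first.
    by rewrite -IH.
  by rewrite T_cons t_eq_m IH.
rewrite -prefix_eq; apply: functional_extensionality => t.
by apply: functional_extensionality => e; rewrite /prefix ltn_ord.
Qed.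

End Transcripts.

Section Protocol.
Variables (F : finFieldType) (N h : nat) (Wt KSt KRt : Type).
Variable dir : 'I_N -> 'I_h -> bool.
Variable fS : 'I_N -> 'I_h -> Wt -> KSt -> ('I_N -> 'I_h -> F) -> F.
Variable fR : 'I_N -> 'I_h -> KRt -> ('I_N -> 'I_h -> F) -> F.

(* Rectangle property: if (w1,s1,r1) and (w2,s2,r2) produce the same transcript,
   so does (w1,s1,r2), since S-symbols only see (w1,s1) and R-symbols only r2. *)
Lemma run_swap_receiver w1 s1 r1 w2 s2 r2 :
  run dir fS fR w1 s1 r1 = run dir fS fR w2 s2 r2 ->
  run dir fS fR w1 s1 r2 = run dir fS fR w1 s1 r1.
Proof.
move=> same_run; apply: esym; apply: consistent_unique => t e.
have S_step := transcript_consistent 0%R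
  (fun t e hist => if dir t e then fS t e w1 s1 hist else fR t e r1 hist) t e.
have R_step := transcript_consistent 0%R
  (fun t e hist => if dir t e then fS t e w2 s2 hist else fR t e r2 hist) t e.
rewrite /run in same_run *; rewrite -same_run /= in R_step.
by case: (dir t e) in S_step R_step *.
Qed.

End Protocol.

(* If g is a function of f on D, then g takes at most as many values as f on D:
   the graph {(f a, g a)} projects injectively onto its first coordinate. *)
Lemma card_imset_factor (T U V : finType) (D : {set T}) (f : T -> U) (g : T -> V) :
  {in D &, forall a b, f a = f b -> g a = g b} -> (#|g @: D| <= #|f @: D|)%N.
Proof.
move=> g_of_f; pose graph := [set (f a, g a) | a in D].
have -> : g @: D = snd @: graph by rewrite -imset_comp.
have -> : f @: D = fst @: graph by rewrite -imset_comp.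
rewrite [X in (_ <= X)%N]card_in_imset ?leq_imset_card //.
move=> _ _ /imsetP[a Da ->] /imsetP[b Db ->] /= fab.
by rewrite fab (g_of_f a b Da Db fab).
Qed.

Section Views.
Variables (F : finFieldType) (N h : nat).

Lemma view_complement_inj (A : {set 'I_h}) (T1 T2 : 'I_N -> 'I_h -> F) :
  view A T1 = view A T2 -> view (~: A) T1 = view (~: A) T2 -> T1 = T2.
Proof.
move=> same_A same_notA.
apply: functional_extensionality => t; apply: functional_extensionality => e.
have := congr1 (fun v : {ffun _ -> F} => v (t, e)) same_A.
have := congr1 (fun v : {ffun _ -> F} => v (t, e)) same_notA.
by rewrite !ffunE /= inE; case: (e \in A).
Qed.

Lemma card_view_image (X : finType) (D : {set X}) (f : X -> 'I_N -> 'I_h -> F)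
    (B : {set 'I_h}) :
  (#|[set view B (f x) | x in D]| <= #|F| ^ (N * #|B|))%N.
Proof.
pose E := [set te : 'I_N * 'I_h | te.2 \in B].
have views_on_E : [set view B (f x) | x in D] \subset pffun_on 0%R E predT.
  apply/subsetP => _ /imsetP[x _ ->]; apply/pffun_onP; split=> //.
  apply/subsetP => te; rewrite !inE ffunE.
  by case: ifP => // _; rewrite eqxx.
apply: leq_trans (subset_leq_card views_on_E) _.
rewrite card_pffun_on (eq_card (B := F)) //.
have -> : E = setX [set: 'I_N] B by apply/setP => -[t e]; rewrite !inE.
by rewrite cardsX cardsT card_ord.
Qed.

End Views.

Section Decoding.
Variables (F : finFieldType) (N h : nat) (Wt KSt KRt : finType).
Variables (pW : Wt -> R) (pS : KSt -> R) (pR : KRt -> R).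
Hypotheses (pW_ge0 : forall w, 0 <= pW w) (pS_ge0 : forall s, 0 <= pS s)
  (pR_ge0 : forall r, 0 <= pR r).
Variable dir : 'I_N -> 'I_h -> bool.
Variable fS : 'I_N -> 'I_h -> Wt -> KSt -> ('I_N -> 'I_h -> F) -> F.
Variable fR : 'I_N -> 'I_h -> KRt -> ('I_N -> 'I_h -> F) -> F.
Variable dec : KRt -> ('I_N -> 'I_h -> F) -> Wt.
Hypothesis decodable : forall w ks kr, 0 < pW w -> 0 < pS ks -> 0 < pR kr ->
  dec kr (run dir fS fR w ks kr) = w.

Definition joint (o : Wt * KSt * KRt) : R := pW o.1.1 * pS o.1.2 * pR o.2.

Definition outcome_run (o : Wt * KSt * KRt) : 'I_N -> 'I_h -> F :=
  run dir fS fR o.1.1 o.1.2 o.2.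

(* With zero-error decoding, the transcript of a positive-probability outcome
   determines its message: decode with the receiver randomness of either run. *)
Lemma transcript_determines_message o1 o2 :
  0 < joint o1 -> 0 < joint o2 -> outcome_run o1 = outcome_run o2 -> o1.1.1 = o2.1.1.
Proof.
case: o1 o2 => [[w1 s1] r1] [[w2 s2] r2] pos1 pos2; rewrite /outcome_run /= => same_run.
have [w1_pos s1_pos r1_pos] := Rmult3_pos_inv (pW_ge0 w1) (pS_ge0 s1) (pR_ge0 r1) pos1.
have [w2_pos s2_pos r2_pos] := Rmult3_pos_inv (pW_ge0 w2) (pS_ge0 s2) (pR_ge0 r2) pos2.
rewrite -(decodable w1_pos s1_pos r2_pos) -(decodable w2_pos s2_pos r2_pos).
by rewrite (run_swap_receiver same_run) same_run.
Qed.

(* Given the view y on A, at most q^(N (h - |A|)) messages have positive joint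
   probability with y: on such outcomes the message is a function of the view
   on the unobserved edges. *)
Lemma card_compatible_messages (A : {set 'I_h}) (y : {ffun 'I_N * 'I_h -> F}) :
  (#|[pred x | posb (prob joint (fun o => (o.1.1 == x) && (view A (outcome_run o) == y)))]|
    <= #|F| ^ (N * (h - #|A|)))%N.
Proof.
pose O := [set o | posb (joint o) && (view A (outcome_run o) == y)].
have joint_ge0 o : 0 <= joint o by apply: Rmult_le_pos; [apply: Rmult_le_pos|].
have supp_sub : [pred x | posb (prob joint (fun o => (o.1.1 == x) &&
    (view A (outcome_run o) == y)))] \subset [set o.1.1 | o in O].
  apply/subsetP => x /posbP /(Rsum_pos joint_ge0)[o /andP[/eqP <- view_o] pos_o].
  by apply: imset_f; rewrite inE view_o andbT; apply/posbP.
apply: leq_trans (subset_leq_card supp_sub) _.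
have -> : (h - #|A|)%N = #|~: A| by rewrite -[h in (h - _)%N]card_ord -(cardsC A) addKn.
apply: leq_trans (card_view_image O outcome_run (~: A)).
apply: card_imset_factor => o1 o2; rewrite !inE.
move=> /andP[/posbP pos1 /eqP view1] /andP[/posbP pos2 /eqP view2] same_rest.
apply: transcript_determines_message => //.
by apply: (view_complement_inj (A := A)); rewrite // view1 view2.
Qed.

End Decoding.

Theorem mainTheorem7 (F : finFieldType) (h k N : nat) (Wt KSt KRt : finType)
    (pW : Wt -> R) (pS : KSt -> R) (pR : KRt -> R)
    (pW_ge0 : forall w, 0 <= pW w) (pW_sum : \big[Rplus/R0]_(w : Wt) pW w = 1)
    (pS_ge0 : forall s, 0 <= pS s) (pS_sum : \big[Rplus/R0]_(s : KSt) pS s = 1)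
    (pR_ge0 : forall r, 0 <= pR r) (pR_sum : \big[Rplus/R0]_(r : KRt) pR r = 1)
    (dir : 'I_N -> 'I_h -> bool)
    (fS : 'I_N -> 'I_h -> Wt -> KSt -> ('I_N -> 'I_h -> F) -> F)
    (fR : 'I_N -> 'I_h -> KRt -> ('I_N -> 'I_h -> F) -> F)
    (dec : KRt -> ('I_N -> 'I_h -> F) -> Wt) :
  let P : (Wt * KSt * KRt)%type -> R := fun o => pW o.1.1 * pS o.1.2 * pR o.2 in
  let msg : (Wt * KSt * KRt)%type -> Wt := fun o => o.1.1 in
  let tr (o : (Wt * KSt * KRt)%type) := run dir fS fR o.1.1 o.1.2 o.2 in
  (k <= h)%nat ->
  (* zero-error decodability *)
  (forall w ks kr, 0 < pW w -> 0 < pS ks -> 0 < pR kr ->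
     dec kr (run dir fS fR w ks kr) = w) ->
  (* secrecy against every k-edge wiretapper *)
  (forall A : {set 'I_h}, #|A| = k ->
     cond_entropy #|F| P msg (fun o => view A (tr o)) = entropy #|F| P msg) ->
  entropy #|F| P msg <= INR N * (INR h - INR k).
Proof.
move=> P msg tr k_le_h decodable secret.
pose A := [set widen_ord k_le_h i | i in 'I_k].
have card_A : #|A| = k.
  by rewrite card_imset ?card_ord // => i j /(congr1 val) /= /val_inj.
have q_gt1 : (1 < #|F|)%N := card_finNzRing_gt1 F.
rewrite -(secret A card_A).
pose M := INR (#|F| ^ (N * (h - k))).
apply: Rle_trans (cond_entropy_le_log_support (M := M) q_gt1 _ _ _ _) _.
- by move=> o; apply: Rmult_le_pos; [apply: Rmult_le_pos|].
- by rewrite product_mass_sum pW_sum pS_sum pR_sum; ring.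
- by apply/lt_0_INR/ltP; rewrite expn_gt0 ltnW.
- move=> y; apply/le_INR/leP; rewrite -card_A.
  exact: (card_compatible_messages pW_ge0 pS_ge0 pR_ge0 decodable).
- rewrite ln_INR_expn_ratio // -multE -minusE mult_INR minus_INR; [exact: Rle_refl | exact/leP].
Qed.
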